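(* Let $\epsilon\in\{1,-1\}$ and let $\Phi,\Psi$ be bounded operators on $\ell^2$ satisfying $$\Phi\Phi^\dagger=1+\epsilon\Psi\Psi^\dagger,\quad \Phi^\dagger\Phi=1+\epsilon\Psi^T\bar\Psi,\quad \Phi\Psi^T=\epsilon\Psi\Phi^T,\quad \Phi^\dagger\Psi=\epsilon\Psi^T\bar\Phi,$$ with $\Phi$ having a bounded inverse. Put $X:=\bar\Psi\Phi^{-1}$. Then: (i) if $\epsilon=1$, $\|X\|<1$; (ii) for every orthogonal projector $\tilde P$ on $\ell^2$, the operators $$Y:=1-\epsilon X^\dagger\tilde P^TX\tilde P,\qquad \tilde Y:=1-\epsilon X\tilde PX^\dagger\tilde P^T$$ have bounded inverses, for both $\epsilon=1$ and $\epsilon=-1$.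
   Context: Operators are written as matrices in a fixed orthonormal basis of $\ell^2$; bar denotes entrywise complex conjugation, $T$ the transpose, $\dagger$ the adjoint. $\|\cdot\|$ is the operator norm. *)

(* classical reals.  Bounded operators on l^2(N; C) as
   infinite matrices in the standard orthonormal basis. *)
From Stdlib Require Import Reals Classical ClassicalEpsilon FunctionalExtensionality.
Open Scope R_scope.

Record C := mkC { re : R ; im : R }.
Definition C0 : C := mkC 0 0.
Definition C1 : C := mkC 1 0.
Definition Cadd (a b : C) : C := mkC (re a + re b) (im a + im b).
Definition Cmul (a b : C) : C :=
  mkC (re a * re b - im a * im b) (re a * im b + im a * re b).
Definition Cscale (r : R) (a : C) : C := mkC (r * re a) (r * im a).
Definition Cconj (a : C) : C := mkC (re a) (- im a).
Definition Cnorm2 (a : C) : R := re a * re a + im a * im a.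

Definition Csum_to (f : nat -> C) (l : C) : Prop :=
  infinite_sum (fun n => re (f n)) (re l) /\ infinite_sum (fun n => im (f n)) (im l).
Definition Csum (f : nat -> C) : C :=
  epsilon (inhabits C0) (fun l => Csum_to f l).

Definition vec := nat -> C.
Definition l2 (x : vec) : Prop := exists s, infinite_sum (fun n => Cnorm2 (x n)) s.
(* squared norm ||x||^2 (meaningful when l2 x) *)
Definition l2norm2 (x : vec) : R :=
  epsilon (inhabits 0) (fun s => infinite_sum (fun n => Cnorm2 (x n)) s).

Definition op := nat -> nat -> C.
Definition apply (A : op) (x : vec) : vec := fun i => Csum (fun j => Cmul (A i j) (x j)).

Definition bounded_op (A : op) : Prop :=
  exists M : R, forall x, l2 x ->
    (forall i, exists l, Csum_to (fun j => Cmul (A i j) (x j)) l) /\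
    l2 (apply A x) /\ l2norm2 (apply A x) <= M * l2norm2 x.

Definition idop : op := fun i j => if Nat.eqb i j then C1 else C0.
Definition mul (A B : op) : op := fun i k => Csum (fun j => Cmul (A i j) (B j k)).
Definition addop (A B : op) : op := fun i j => Cadd (A i j) (B i j).
Definition scaleop (r : R) (A : op) : op := fun i j => Cscale r (A i j).
Definition subop (A B : op) : op := addop A (scaleop (-1) B).
Definition trans (A : op) : op := fun i j => A j i.
Definition conjop (A : op) : op := fun i j => Cconj (A i j).
Definition adj (A : op) : op := fun i j => Cconj (A j i).

Definition opnorm_lt (A : op) (r : R) : Prop :=
  exists c, 0 <= c < r /\
    forall x, l2 x -> l2 (apply A x) /\ l2norm2 (apply A x) <= c * c * l2norm2 x.

Definition bounded_invertible (A : op) : Prop :=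
  exists B, bounded_op B /\ mul A B = idop /\ mul B A = idop.

Definition orth_projector (P : op) : Prop :=
  bounded_op P /\ mul P P = P /\ adj P = P.

(* Put [y = Phi^-1 x].  The relation [Phi^dagger Phi = 1 + eps Psibar^dagger Psibar] gives
   [|x|^2 = |Phi y|^2 = |y|^2 + eps |Psibar y|^2 = |Phi^-1 x|^2 + eps |X x|^2]; for [eps = 1],
   together with [|x| <= |Phi| |y|], this bounds [|X x|^2] by [(1 - c) |x|^2] with [c > 0].
   For (ii) let [Q = P^T], again an orthogonal projector.  Then [Y = 1 - eps U P] with
   [U = X^dagger Q X P], and [1 - eps U P] is invertible as soon as [1 - eps P U] is.
   The latter operator [T] satisfies [Re <T y, y> = |y|^2 - eps |Q X P y|^2], which is at
   least [|y|^2] for [eps = -1] and at least [(1 - |X|^2) |y|^2] for [eps = 1]; a coercive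
   operator is invertible (Lax-Milgram, obtained here from the contraction principle).
   [Ytilde] is the same construction with [X^dagger] in place of [X]. *)

From Pilot Require Import Defs.
From Stdlib Require Import Reals Lra Lia ClassicalEpsilon FunctionalExtensionality.
(* Import [Defs] again so that [C] means its complex numbers, not the binomial [Rfunctions.C]. *)
Import Defs.
Open Scope R_scope.

Lemma Un_cv_ext (u v : nat -> R) l : (forall n, u n = v n) -> Un_cv u l -> Un_cv v l.
Proof. intros H Hu e He. destruct (Hu e He) as [N HN]. exists N; intros n Hn. rewrite <- H. auto. Qed.

Lemma Un_cv_const c : Un_cv (fun _ => c) c.
Proof. intros e He. exists 0%nat. intros. unfold Rdist. rewrite Rminus_diag, Rabs_R0. lra. Qed.

Lemma Un_cv_scal_r (u : nat -> R) l c : Un_cv u l -> Un_cv (fun n => u n * c) (l * c).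
Proof. intros H. apply (CV_mult u (fun _ => c)); auto using Un_cv_const. Qed.

Lemma infinite_sum_plus s t a b : infinite_sum s a -> infinite_sum t b ->
  infinite_sum (fun n => s n + t n) (a + b).
Proof. intros Ha Hb. apply (Un_cv_ext (fun n => sum_f_R0 s n + sum_f_R0 t n)).
  - intros; now rewrite plus_sum.
  - now apply CV_plus. Qed.

Lemma infinite_sum_scal_r s a c : infinite_sum s a -> infinite_sum (fun n => s n * c) (a * c).
Proof. intros Ha. apply (Un_cv_ext (fun n => sum_f_R0 s n * c)).
  - intros; rewrite Rmult_comm, scal_sum; auto.
  - now apply Un_cv_scal_r. Qed.

Lemma infinite_sum_scal_l s a c : infinite_sum s a -> infinite_sum (fun n => c * s n) (c * a).
Proof. intros H. apply (Un_cv_ext (fun n => sum_f_R0 (fun k => s k * c) n)).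
  - intros; apply sum_eq; intros; ring.
  - rewrite Rmult_comm; now apply infinite_sum_scal_r. Qed.

Lemma infinite_sum_ext s t a : (forall n, s n = t n) -> infinite_sum s a -> infinite_sum t a.
Proof. intros H Ha. apply (Un_cv_ext (sum_f_R0 s)); auto. intros; apply sum_eq; auto. Qed.

Lemma infinite_sum_opp s a : infinite_sum s a -> infinite_sum (fun n => - s n) (- a).
Proof. intros H. apply (infinite_sum_ext (fun n => s n * (-1))). intros; ring.
  replace (-a) with (a * -1) by ring. now apply infinite_sum_scal_r. Qed.

Lemma infinite_sum_minus s t a b : infinite_sum s a -> infinite_sum t b ->
  infinite_sum (fun n => s n - t n) (a - b).
Proof. intros. apply (infinite_sum_ext (fun n => s n + - t n)). intros; ring.
  apply infinite_sum_plus; auto. now apply infinite_sum_opp. Qed.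

Lemma infinite_sum_le s t a b : (forall n, s n <= t n) -> infinite_sum s a -> infinite_sum t b -> a <= b.
Proof. intros H Ha Hb. eapply (@Rle_cv_lim (sum_f_R0 s) (sum_f_R0 t)); eauto.
  intros; apply sum_Rle; auto. Qed.

Lemma partial_sum_le_infinite_sum s l N : (forall n, 0 <= s n) -> infinite_sum s l -> sum_f_R0 s N <= l.
Proof. intros H Hl. apply sum_incr; auto. Qed.

Lemma sum_f_R0_nonneg s N : (forall n, 0 <= s n) -> 0 <= sum_f_R0 s N.
Proof. intros H; induction N; simpl; auto. specialize (H (S N)); lra. Qed.

Lemma infinite_sum_nonneg s l : (forall n, 0 <= s n) -> infinite_sum s l -> 0 <= l.
Proof. intros H Hl. apply Rle_trans with (sum_f_R0 s 0). simpl; auto.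
  now apply partial_sum_le_infinite_sum. Qed.

Lemma term_le_sum_f_R0 s n : (forall k, 0 <= s k) -> s n <= sum_f_R0 s n.
Proof. intros H. destruct n; simpl. lra. pose proof (sum_f_R0_nonneg s n H). lra. Qed.

Lemma term_le_infinite_sum s l n : (forall k, 0 <= s k) -> infinite_sum s l -> s n <= l.
Proof. intros. eapply Rle_trans. apply term_le_sum_f_R0; auto.
  now apply partial_sum_le_infinite_sum. Qed.

Lemma infinite_sum_of_bounded_partial_sums s B : (forall n, 0 <= s n) -> (forall N, sum_f_R0 s N <= B) ->
  exists l, infinite_sum s l /\ l <= B.
Proof. intros H HB.
  destruct (growing_cv (sum_f_R0 s)) as [l Hl].
  - intros n; simpl. specialize (H (S n)); lra.
  - exists B. intros x [n ->]. auto.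
  - exists l; split; auto. eapply (@Rle_cv_lim (sum_f_R0 s) (fun _ => B)); eauto.
    apply Un_cv_const. Qed.

Lemma infinite_sum_comparison s t b : (forall n, Rabs (s n) <= t n) -> infinite_sum t b ->
  exists a, infinite_sum s a.
Proof. intros H Hb.
  assert (Ht2 : infinite_sum (fun n => t n * 2) (b * 2)) by now apply infinite_sum_scal_r.
  destruct (Rseries_CV_comp (fun n => t n - s n) (fun n => t n * 2)) as [l Hl].
  - intros n. specialize (H n). pose proof (Rle_abs (s n)). pose proof (Rle_abs (- s n)).
    rewrite Rabs_Ropp in *. lra.
  - exists (b*2); exact Ht2.
  - exists (b - l). apply (infinite_sum_ext (fun n => t n - (t n - s n))). intros; ring.
    apply infinite_sum_minus; auto. Qed.

Lemma sum_f_R0_stationary s N n : (forall k, (N < k)%nat -> s k = 0) -> (N <= n)%nat ->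
  sum_f_R0 s n = sum_f_R0 s N.
Proof. intros H Hn. induction Hn; auto. simpl. rewrite H by lia. lra. Qed.

Lemma infinite_sum_eventually_zero s N : (forall k, (N < k)%nat -> s k = 0) ->
  infinite_sum s (sum_f_R0 s N).
Proof. intros H e He. exists N. intros n Hn. rewrite (sum_f_R0_stationary s N n); auto.
  unfold Rdist; rewrite Rminus_diag, Rabs_R0; lra. Qed.

Lemma sum_f_R0_tail s N n : (N <= n)%nat ->
  sum_f_R0 (fun j => if (j <=? N)%nat then 0 else s j) n = sum_f_R0 s n - sum_f_R0 s N.
Proof. intros Hn. induction Hn.
  - rewrite (sum_eq _ (fun _ => 0)). 2:{ intros i Hi. destruct (Nat.leb_spec i N); [reflexivity | lia]. }
    clear. induction N; simpl; lra.
  - rewrite !tech5, IHHn. assert (E: (S m <=? N)%nat = false) by (apply Nat.leb_gt; lia). rewrite E.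
    lra. Qed.

Lemma infinite_sum_tail s l N : infinite_sum s l ->
  infinite_sum (fun j => if (j <=? N)%nat then 0 else s j) (l - sum_f_R0 s N).
Proof. intros H e He. destruct (H e He) as [M HM]. exists (max M N). intros n Hn.
  rewrite sum_f_R0_tail by lia. unfold Rdist. replace (sum_f_R0 s n - sum_f_R0 s N - (l - sum_f_R0 s N))
   with (sum_f_R0 s n - l) by ring. apply HM; lia. Qed.

Lemma infinite_sum_remainder_cv0 s l : infinite_sum s l -> Un_cv (fun N => l - sum_f_R0 s N) 0.
Proof. intros H e He. destruct (H e He) as [M HM]. exists M. intros n Hn.
  unfold Rdist. replace (l - sum_f_R0 s n - 0) with (- (sum_f_R0 s n - l)) by ring.
  rewrite Rabs_Ropp. apply HM; auto. Qed.

Lemma sum_f_R0_zero f N : (forall m, (m <= N)%nat -> f m = 0) -> sum_f_R0 f N = 0.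
Proof. intros H. induction N; simpl. apply H; lia. rewrite IHN, H; auto. ring. Qed.

Lemma sum_f_R0_single f k : (forall m, m <> k -> f m = 0) -> sum_f_R0 f k = f k.
Proof. intros H. destruct k. reflexivity. simpl. rewrite sum_f_R0_zero. ring. intros; apply H; lia. Qed.

Lemma Un_cv0_of_square_le (a b : nat -> R) : (forall n, a n * a n <= b n) -> Un_cv b 0 -> Un_cv a 0.
Proof. intros H Hb e He. destruct (Hb (e*e)) as [N HN]. nra. exists N. intros n Hn.
  specialize (HN n Hn). specialize (H n). unfold Rdist in *. rewrite Rminus_0_r in *.
  apply Rabs_def2 in HN. destruct (Rlt_or_le (Rabs (a n)) e); auto.
  assert (Rabs (a n) * Rabs (a n) = a n * a n) by (rewrite <- Rabs_mult; apply Rabs_right; nra).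
  nra. Qed.

Lemma Un_cv_of_sub_cv0 (u : nat -> R) l : Un_cv (fun n => u n - l) 0 -> Un_cv u l.
Proof. intros H e He. destruct (H e He) as [N HN]. exists N. intros n Hn.
  specialize (HN n Hn). unfold Rdist in *. rewrite Rminus_0_r in HN. auto. Qed.

Lemma Un_cv0_le_scal (a b : nat -> R) M : (forall n, 0 <= a n <= M * b n) -> Un_cv b 0 -> Un_cv a 0.
Proof. intros H Hb. apply (Un_cv0_of_square_le a (fun n => (M * b n) * (M * b n))).
  - intros n; specialize (H n). nra.
  - replace 0 with ((M * 0) * (M * 0)) by ring.
    apply CV_mult; apply (Un_cv_ext (fun n => b n * M)); try (intros; ring);
    replace (M * 0) with (0 * M) by ring; now apply Un_cv_scal_r. Qed.

Lemma Un_cv0_of_weighted_bound (a d : nat -> R) Y : 0 <= Y ->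
  (forall n t, 0 < t -> 2 * Rabs (a n) <= t * d n + / t * Y) -> Un_cv d 0 -> Un_cv a 0.
Proof. intros HY H Hd e He. set (t := (Y + 1) / e).
  assert (Ht : 0 < t) by (unfold t; apply Rdiv_lt_0_compat; lra).
  assert (HtY : / t * Y < e).
  { unfold t. rewrite Rinv_div. apply (Rmult_lt_reg_r (Y+1)). lra.
    replace (e / (Y + 1) * Y * (Y + 1)) with (e * Y) by (field; lra). nra. }
  destruct (Hd (e / t)) as [N HN]. apply Rdiv_lt_0_compat; lra. exists N. intros n Hn.
  specialize (HN n Hn). unfold Rdist in *. rewrite Rminus_0_r in *. apply Rabs_def2 in HN.
  specialize (H n t Ht). assert (t * d n < e) by (destruct HN as [HN _];
    replace e with (t * (e / t)) by (field; lra); apply Rmult_lt_compat_l; auto). lra. Qed.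

Lemma Un_cv_sum_f_R0 (f : nat -> nat -> R) (g : nat -> R) M :
  (forall i, Un_cv (fun m => f m i) (g i)) -> Un_cv (fun m => sum_f_R0 (f m) M) (sum_f_R0 g M).
Proof. intros H. induction M; simpl. apply H. apply CV_plus; auto. Qed.

Lemma pow_le_decr q n m : 0 <= q <= 1 -> (n <= m)%nat -> q ^ m <= q ^ n.
Proof. intros Hq H. induction H. lra. simpl. assert (0 <= q ^ m) by (apply pow_le; lra). nra. Qed.

Lemma pow_mul_eventually_lt q B e : 0 <= q < 1 -> 0 <= B -> 0 < e ->
  exists N, forall n, (n >= N)%nat -> q ^ n * B < e.
Proof. intros Hq HB He. destruct (pow_lt_1_zero q) with (y := e / (B + 1)) as [N HN].
  rewrite Rabs_right; lra. apply Rdiv_lt_0_compat; lra.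
  exists N. intros n Hn. specialize (HN n Hn). rewrite Rabs_right in HN.
  2: apply Rle_ge, pow_le; lra.
  assert (0 <= q ^ n) by (apply pow_le; lra).
  apply Rle_lt_trans with (q ^ n * (B + 1)). nra.
  replace e with (e / (B + 1) * (B + 1)) by (field; lra). apply Rmult_lt_compat_r; lra. Qed.

Lemma Un_cv_pow_mul q B : 0 <= q < 1 -> 0 <= B -> Un_cv (fun n => q ^ n * B) 0.
Proof. intros Hq HB e He. destruct (pow_mul_eventually_lt q B e) as [N HN]; auto. exists N. intros n Hn.
  unfold Rdist. rewrite Rminus_0_r, Rabs_right. auto. apply Rle_ge, Rmult_le_pos; auto.
  apply pow_le; lra. Qed.

Lemma Rabs_lt_of_square_lt a e : 0 < e -> a * a < e * e -> Rabs a < e.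
Proof. intros He H. destruct (Rlt_or_le (Rabs a) e); auto.
  assert (Rabs a * Rabs a = a * a) by (rewrite <- Rabs_mult; apply Rabs_right; nra). nra. Qed.

Lemma Cauchy_crit_geometric (a : nat -> R) q B : 0 <= q < 1 -> 0 <= B ->
  (forall N n m, (N <= n)%nat -> (N <= m)%nat -> (a m - a n) * (a m - a n) <= q ^ N * B) ->
  Cauchy_crit a.
Proof.
  intros Hq HB H e He.
  destruct (pow_mul_eventually_lt q B (e * e)) as [N HN]; [lra | lra | nra |].
  exists N. intros n m Hn Hm. unfold Rdist. apply Rabs_lt_of_square_lt; [lra |].
  specialize (HN N (le_n N)). pose proof (H N m n Hm Hn). lra.
Qed.

Lemma C_ext (a b : C) : re a = re b -> im a = im b -> a = b.
Proof. destruct a, b; simpl; intros; subst; auto. Qed.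

Ltac Csimpl := unfold Cadd, Cmul, Cscale, Cconj, Cnorm2, C0, C1 in *; simpl in *.
Ltac Cring := apply C_ext; Csimpl; ring.

Lemma Cconj_involutive a : Cconj (Cconj a) = a.
Proof. Cring. Qed.

Definition Cpartial_sum (f : nat -> C) (N : nat) : C :=
  mkC (sum_f_R0 (fun j => re (f j)) N) (sum_f_R0 (fun j => im (f j)) N).

Lemma Csum_eq f l : Csum_to f l -> Csum f = l.
Proof. intros H. unfold Csum. assert (E : exists l, Csum_to f l) by eauto.
  pose proof (epsilon_spec (inhabits C0) _ E) as H2. set (l2 := epsilon _ _) in *.
  destruct H as [H1a H1b], H2 as [H2a H2b]. apply C_ext.
  - eapply uniqueness_sum; eauto.
  - eapply uniqueness_sum; eauto. Qed.

Lemma Csum_to_ext f g l : (forall n, f n = g n) -> Csum_to f l -> Csum_to g l.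
Proof. intros H [H1 H2]. split; eapply infinite_sum_ext; eauto; intros; simpl; now rewrite H. Qed.

Lemma Csum_to_add f g a b : Csum_to f a -> Csum_to g b ->
  Csum_to (fun j => Cadd (f j) (g j)) (Cadd a b).
Proof. intros [H1 H2] [H3 H4]. split; simpl; now apply infinite_sum_plus. Qed.

Lemma Csum_to_mul f a c : Csum_to f a -> Csum_to (fun j => Cmul c (f j)) (Cmul c a).
Proof. intros [H1 H2]. split; simpl.
  - apply infinite_sum_minus; now apply infinite_sum_scal_l.
  - apply infinite_sum_plus; now apply infinite_sum_scal_l. Qed.

Lemma Csum_to_scale f a t : Csum_to f a -> Csum_to (fun j => Cscale t (f j)) (Cscale t a).
Proof. intros [H1 H2]. split; simpl; now apply infinite_sum_scal_l. Qed.

Lemma Csum_to_conj f a : Csum_to f a -> Csum_to (fun j => Cconj (f j)) (Cconj a).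
Proof. intros [H1 H2]. split; simpl; auto. now apply infinite_sum_opp. Qed.

Lemma Csum_to_eventually_zero f N : (forall k, (N < k)%nat -> f k = C0) -> Csum_to f (Cpartial_sum f N).
Proof. intros H. split; simpl; apply infinite_sum_eventually_zero; intros k Hk; rewrite H; auto. Qed.

Lemma Cpartial_sum_S f N : Cpartial_sum f (S N) = Cadd (Cpartial_sum f N) (f (S N)).
Proof. reflexivity. Qed.
Lemma Cpartial_sum_0 f : Cpartial_sum f 0 = f 0%nat.
Proof. apply C_ext; reflexivity. Qed.

Lemma Un_cv_Cnorm2_sub (u : nat -> C) (a : C) (z : C) :
  Un_cv (fun n => re (u n)) (re a) -> Un_cv (fun n => im (u n)) (im a) ->
  Un_cv (fun n => Cnorm2 (mkC (re z - re (u n)) (im z - im (u n))))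
        (Cnorm2 (mkC (re z - re a) (im z - im a))).
Proof. intros H1 H2. unfold Cnorm2; simpl.
  apply CV_plus; apply CV_mult; apply CV_minus; auto; apply Un_cv_const. Qed.

(** * Square-summable sequences *)

Definition vadd (x y : vec) : vec := fun i => Cadd (x i) (y i).
Definition vsub (x y : vec) : vec := fun i => mkC (re (x i) - re (y i)) (im (x i) - im (y i)).
Definition vscal (c : C) (x : vec) : vec := fun i => Cmul c (x i).
Definition vrs (t : R) (x : vec) : vec := fun i => Cscale t (x i).
Definition vconj (x : vec) : vec := fun i => Cconj (x i).
Definition vzero : vec := fun _ => C0.
Definition basis (k : nat) : vec := fun i => idop i k.
Definition trunc (N : nat) (x : vec) : vec := fun i => if (i <=? N)%nat then x i else C0.

Ltac vext := apply functional_extensionality; intro.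
Ltac vring := vext; unfold vadd, vsub, vscal, vrs, vconj, vzero in *; Cring.

Lemma vconj_involutive x : vconj (vconj x) = x.
Proof. vring. Qed.

Lemma Cnorm2_nonneg a : 0 <= Cnorm2 a.
Proof. unfold Cnorm2; nra. Qed.

Lemma l2norm2_spec x : l2 x -> infinite_sum (fun n => Cnorm2 (x n)) (l2norm2 x).
Proof. intros H. unfold l2norm2. apply (epsilon_spec (inhabits 0) _ H). Qed.

Lemma l2norm2_eq x s : infinite_sum (fun n => Cnorm2 (x n)) s -> l2norm2 x = s.
Proof. intros H. eapply uniqueness_sum. apply l2norm2_spec. exists s; auto. auto. Qed.

Lemma l2norm2_nonneg x : l2 x -> 0 <= l2norm2 x.
Proof. intros H. eapply infinite_sum_nonneg. 2: apply l2norm2_spec; auto.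
  intros; apply Cnorm2_nonneg. Qed.

Lemma l2_coord x i : l2 x -> Cnorm2 (x i) <= l2norm2 x.
Proof. intros H. apply (term_le_infinite_sum (fun n => Cnorm2 (x n))). intros; apply Cnorm2_nonneg.
  now apply l2norm2_spec. Qed.

Lemma l2_partial x N : l2 x -> sum_f_R0 (fun n => Cnorm2 (x n)) N <= l2norm2 x.
Proof. intros H. apply partial_sum_le_infinite_sum. intros; apply Cnorm2_nonneg.
  now apply l2norm2_spec. Qed.

Lemma l2_of_bound x B : (forall N, sum_f_R0 (fun n => Cnorm2 (x n)) N <= B) ->
  l2 x /\ l2norm2 x <= B.
Proof. intros H.
  destruct (infinite_sum_of_bounded_partial_sums (fun n => Cnorm2 (x n)) B) as [l [Hl Hb]]; auto.
  intros; apply Cnorm2_nonneg. split. exists l; auto. now rewrite (l2norm2_eq x l). Qed.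

Lemma l2_comp x y c : (forall n, Cnorm2 (x n) <= c * Cnorm2 (y n)) -> l2 y -> l2 x.
Proof. intros H Hy.
  destruct (infinite_sum_comparison (fun n => Cnorm2 (x n)) (fun n => c * Cnorm2 (y n))
             (c * l2norm2 y)) as [a Ha].
  - intros n. rewrite Rabs_right. auto. apply Rle_ge, Cnorm2_nonneg.
  - apply infinite_sum_scal_l. now apply l2norm2_spec.
  - exists a; auto. Qed.

Lemma l2_add x y : l2 x -> l2 y -> l2 (vadd x y).
Proof. intros Hx Hy. destruct (infinite_sum_comparison (fun n => Cnorm2 (vadd x y n))
   (fun n => 2 * Cnorm2 (x n) + 2 * Cnorm2 (y n)) (2 * l2norm2 x + 2 * l2norm2 y)) as [a Ha].
  - intros n. rewrite Rabs_right. 2: apply Rle_ge, Cnorm2_nonneg. unfold vadd; Csimpl.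
    pose proof (Rle_0_sqr (re (x n) - re (y n))). pose proof (Rle_0_sqr (im (x n) - im (y n))).
    unfold Rsqr in *. nra.
  - apply infinite_sum_plus; apply infinite_sum_scal_l; now apply l2norm2_spec.
  - exists a; auto. Qed.

Lemma l2_scal c x : l2 x -> l2 (vscal c x).
Proof. intros H. apply (l2_comp _ x (Cnorm2 c)); auto. intros n. unfold vscal; Csimpl. nra. Qed.

Lemma l2_rs t x : l2 x -> l2 (vrs t x).
Proof. intros H. apply (l2_comp _ x (t*t)); auto. intros n. unfold vrs; Csimpl. nra. Qed.

Lemma l2_conj x : l2 x -> l2 (vconj x).
Proof. intros H. apply (l2_comp _ x 1); auto. intros n. unfold vconj; Csimpl. nra. Qed.

Lemma l2_sub x y : l2 x -> l2 y -> l2 (vsub x y).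
Proof. intros Hx Hy. replace (vsub x y) with (vadd x (vrs (-1) y)) by vring.
  apply l2_add; auto. now apply l2_rs. Qed.

Lemma l2_finite x N : (forall k, (N < k)%nat -> x k = C0) -> l2 x.
Proof. intros H. exists (sum_f_R0 (fun n => Cnorm2 (x n)) N). apply infinite_sum_eventually_zero.
  intros k Hk. rewrite H; auto. Csimpl; ring. Qed.

Lemma l2_zero : l2 vzero.
Proof. apply (l2_finite _ 0). reflexivity. Qed.

Lemma l2norm2_zero : l2norm2 vzero = 0.
Proof.
  apply l2norm2_eq.
  assert (E : sum_f_R0 (fun n => Cnorm2 (vzero n)) 0 = 0) by (simpl; unfold vzero; Csimpl; ring).
  rewrite <- E. apply infinite_sum_eventually_zero. intros. unfold vzero; Csimpl; ring.
Qed.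

Lemma l2_trunc N x : l2 (trunc N x).
Proof. apply (l2_finite _ N). intros k Hk. unfold trunc. destruct (Nat.leb_spec k N); auto; lia. Qed.

Lemma l2_basis k : l2 (basis k).
Proof. apply (l2_finite _ k). intros j Hj. unfold basis, idop.
  destruct (Nat.eqb_spec j k); auto; lia. Qed.

Lemma l2norm2_zero_inv x : l2 x -> l2norm2 x <= 0 -> x = vzero.
Proof. intros H H0. vext. pose proof (l2_coord x x0 H). pose proof (Cnorm2_nonneg (x x0)).
  unfold vzero; apply C_ext; Csimpl; nra. Qed.

Lemma l2norm2_rs t x : l2 x -> l2norm2 (vrs t x) = t * t * l2norm2 x.
Proof. intros H. apply l2norm2_eq. apply (infinite_sum_ext (fun n => t * t * Cnorm2 (x n))).
  intros; unfold vrs; Csimpl; ring. apply infinite_sum_scal_l; now apply l2norm2_spec. Qed.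

Lemma l2norm2_conj x : l2 x -> l2norm2 (vconj x) = l2norm2 x.
Proof. intros H. apply l2norm2_eq. apply (infinite_sum_ext (fun n => Cnorm2 (x n))).
  intros; unfold vconj; Csimpl; ring. now apply l2norm2_spec. Qed.

Lemma l2norm2_sub_comm a b : l2 a -> l2 b -> l2norm2 (vsub a b) = l2norm2 (vsub b a).
Proof. intros. apply l2norm2_eq. eapply infinite_sum_ext. 2: apply l2norm2_spec, l2_sub; auto.
  intros; unfold vsub; Csimpl; ring. Qed.

Definition inner (x y : vec) : C := Csum (fun j => Cmul (Cconj (x j)) (y j)).

Lemma two_mul_le_weighted_squares t a b : 0 < t -> 2 * (a * b) <= t * (a * a) + / t * (b * b).
Proof. intros Ht. set (c := b / t). assert (Hb : b = t * c) by (unfold c; field; lra).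
  rewrite Hb. replace (/ t * (t * c * (t * c))) with (t * (c * c)) by (field; lra).
  assert (0 <= t * ((a - c) * (a - c))) by (apply Rmult_le_pos; [lra | apply Rle_0_sqr]). nra. Qed.

Lemma l2_mul_summable u v : l2 u -> l2 v -> exists l, Csum_to (fun j => Cmul (u j) (v j)) l.
Proof. intros Hu Hv.
  assert (Hs : infinite_sum (fun n => Cnorm2 (u n) + Cnorm2 (v n)) (l2norm2 u + l2norm2 v))
    by (apply infinite_sum_plus; now apply l2norm2_spec).
  destruct (infinite_sum_comparison (fun n => re (Cmul (u n) (v n)))
             (fun n => Cnorm2 (u n) + Cnorm2 (v n)) (l2norm2 u + l2norm2 v)) as [a Ha]; [| exact Hs |].
  { intros n. Csimpl. apply Rabs_le.
    pose proof (two_mul_le_weighted_squares 1 (re (u n)) (re (v n))).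
    pose proof (two_mul_le_weighted_squares 1 (im (u n)) (im (v n))).
    pose proof (two_mul_le_weighted_squares 1 (re (u n)) (- re (v n))).
    pose proof (two_mul_le_weighted_squares 1 (im (u n)) (- im (v n))).
    rewrite Rinv_1 in *. split; nra. }
  destruct (infinite_sum_comparison (fun n => im (Cmul (u n) (v n)))
             (fun n => Cnorm2 (u n) + Cnorm2 (v n)) (l2norm2 u + l2norm2 v)) as [b Hb]; [| exact Hs |].
  { intros n. Csimpl. apply Rabs_le.
    pose proof (two_mul_le_weighted_squares 1 (re (u n)) (im (v n))).
    pose proof (two_mul_le_weighted_squares 1 (im (u n)) (re (v n))).
    pose proof (two_mul_le_weighted_squares 1 (re (u n)) (- im (v n))).
    pose proof (two_mul_le_weighted_squares 1 (im (u n)) (- re (v n))).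
    rewrite Rinv_1 in *. split; nra. }
  exists (mkC a b). split; auto. Qed.

Lemma inner_spec x y : l2 x -> l2 y -> Csum_to (fun j => Cmul (Cconj (x j)) (y j)) (inner x y).
Proof. intros Hx Hy. destruct (l2_mul_summable (vconj x) y) as [l Hl]; auto. now apply l2_conj.
  unfold inner. rewrite (Csum_eq _ l); auto. Qed.

Lemma inner_eq x y l : Csum_to (fun j => Cmul (Cconj (x j)) (y j)) l -> inner x y = l.
Proof. apply Csum_eq. Qed.

Lemma inner_add_l a b y : l2 a -> l2 b -> l2 y -> inner (vadd a b) y = Cadd (inner a y) (inner b y).
Proof. intros. apply inner_eq. eapply Csum_to_ext.
  2: apply Csum_to_add; apply inner_spec; eauto. intros; unfold vadd; Cring. Qed.

Lemma inner_scal_l c a y : l2 a -> l2 y -> inner (vscal c a) y = Cmul (Cconj c) (inner a y).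
Proof. intros. apply inner_eq. eapply Csum_to_ext.
  2: apply Csum_to_mul; apply inner_spec; eauto. intros; unfold vscal; Cring. Qed.

Lemma inner_rs_l t a y : l2 a -> l2 y -> inner (vrs t a) y = Cscale t (inner a y).
Proof. intros. apply inner_eq. eapply Csum_to_ext.
  2: apply Csum_to_scale; apply inner_spec; eauto. intros; unfold vrs; Cring. Qed.

Lemma inner_sub_l a b y : l2 a -> l2 b -> l2 y ->
  inner (vsub a b) y = mkC (re (inner a y) - re (inner b y)) (im (inner a y) - im (inner b y)).
Proof. intros. replace (mkC _ _) with (Cadd (inner a y) (Cscale (-1) (inner b y))) by Cring.
  apply inner_eq. eapply Csum_to_ext.
  2: apply Csum_to_add; [apply inner_spec | apply Csum_to_scale; apply inner_spec]; eauto.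
  intros; unfold vsub; Cring. Qed.

Lemma inner_conj_sym x y : l2 x -> l2 y -> inner y x = Cconj (inner x y).
Proof. intros. apply inner_eq. eapply Csum_to_ext.
  2: apply Csum_to_conj; apply inner_spec; eauto. intros; Cring. Qed.

Lemma inner_self x : l2 x -> inner x x = mkC (l2norm2 x) 0.
Proof. intros H. apply inner_eq. split; simpl.
  - eapply infinite_sum_ext. 2: apply l2norm2_spec; auto. intros; Csimpl; ring.
  - apply (infinite_sum_ext (fun _ => 0)). intros; Csimpl; ring.
    apply (infinite_sum_eventually_zero (fun _ => 0) 0); auto. Qed.

Lemma re_inner_sym x y : l2 x -> l2 y -> re (inner x y) = re (inner y x).
Proof. intros. rewrite (inner_conj_sym x y); auto. Qed.

Lemma inner_zero_l v : l2 v -> inner vzero v = C0.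
Proof. intros. replace vzero with (vrs 0 v) by vring. rewrite inner_rs_l; auto. Cring. Qed.

Lemma inner_re_bound t x y : 0 < t -> l2 x -> l2 y ->
  2 * Rabs (re (inner x y)) <= t * l2norm2 x + / t * l2norm2 y.
Proof. intros Ht Hx Hy. destruct (inner_spec x y Hx Hy) as [H1 _].
  assert (Hs : infinite_sum (fun n => t * Cnorm2 (x n) + / t * Cnorm2 (y n))
                            (t * l2norm2 x + / t * l2norm2 y))
    by (apply infinite_sum_plus; apply infinite_sum_scal_l; now apply l2norm2_spec).
  assert (H2 := infinite_sum_scal_r _ _ 2 H1). assert (H3 := infinite_sum_opp _ _ H2).
  unfold Rabs; destruct (Rcase_abs _).
  - replace (2 * - re (inner x y)) with (- (re (inner x y) * 2)) by ring.
    eapply infinite_sum_le; [|exact H3|exact Hs]. intros n; Csimpl.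
    pose proof (two_mul_le_weighted_squares t (re (x n)) (- re (y n)) Ht).
    pose proof (two_mul_le_weighted_squares t (im (x n)) (- im (y n)) Ht). nra.
  - rewrite Rmult_comm. eapply infinite_sum_le; [|exact H2|exact Hs]. intros n; Csimpl.
    pose proof (two_mul_le_weighted_squares t (re (x n)) (re (y n)) Ht).
    pose proof (two_mul_le_weighted_squares t (im (x n)) (im (y n)) Ht). nra. Qed.

Lemma inner_im_bound t x y : 0 < t -> l2 x -> l2 y ->
  2 * Rabs (im (inner x y)) <= t * l2norm2 x + / t * l2norm2 y.
Proof. intros Ht Hx Hy. destruct (inner_spec x y Hx Hy) as [_ H1].
  assert (Hs : infinite_sum (fun n => t * Cnorm2 (x n) + / t * Cnorm2 (y n))
                            (t * l2norm2 x + / t * l2norm2 y))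
    by (apply infinite_sum_plus; apply infinite_sum_scal_l; now apply l2norm2_spec).
  assert (H2 := infinite_sum_scal_r _ _ 2 H1). assert (H3 := infinite_sum_opp _ _ H2).
  unfold Rabs; destruct (Rcase_abs _).
  - replace (2 * - im (inner x y)) with (- (im (inner x y) * 2)) by ring.
    eapply infinite_sum_le; [|exact H3|exact Hs]. intros n; Csimpl.
    pose proof (two_mul_le_weighted_squares t (re (x n)) (- im (y n)) Ht).
    pose proof (two_mul_le_weighted_squares t (im (x n)) (re (y n)) Ht). nra.
  - rewrite Rmult_comm. eapply infinite_sum_le; [|exact H2|exact Hs]. intros n; Csimpl.
    pose proof (two_mul_le_weighted_squares t (re (x n)) (im (y n)) Ht).
    pose proof (two_mul_le_weighted_squares t (im (x n)) (- re (y n)) Ht). nra. Qed.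

Lemma l2norm2_add x y : l2 x -> l2 y ->
  l2norm2 (vadd x y) = l2norm2 x + 2 * re (inner x y) + l2norm2 y.
Proof. intros Hx Hy. apply l2norm2_eq. destruct (inner_spec x y Hx Hy) as [H1 _].
  eapply infinite_sum_ext.
  2: apply infinite_sum_plus; [apply infinite_sum_plus |];
       [apply l2norm2_spec; auto | apply infinite_sum_scal_l; exact H1 | apply l2norm2_spec; auto].
  intros; unfold vadd; Csimpl; ring. Qed.

Lemma l2norm2_sub x y : l2 x -> l2 y ->
  l2norm2 (vsub x y) = l2norm2 x - 2 * re (inner x y) + l2norm2 y.
Proof. intros Hx Hy. apply l2norm2_eq. destruct (inner_spec x y Hx Hy) as [H1 _].
  eapply infinite_sum_ext.
  2: apply infinite_sum_plus; [apply infinite_sum_minus |];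
       [apply l2norm2_spec; auto | apply infinite_sum_scal_l; exact H1 | apply l2norm2_spec; auto].
  intros; unfold vsub; Csimpl; ring. Qed.

Lemma l2norm2_add_le s x y : 0 < s -> l2 x -> l2 y ->
  l2norm2 (vadd x y) <= (1 + s) * l2norm2 x + (1 + / s) * l2norm2 y.
Proof. intros Hs Hx Hy. rewrite l2norm2_add; auto. pose proof (inner_re_bound s x y Hs Hx Hy).
  pose proof (Rle_abs (re (inner x y))). lra. Qed.

Lemma trunc_S N x : trunc (S N) x = vadd (trunc N x) (vscal (x (S N)) (basis (S N))).
Proof. vext. unfold trunc, vadd, vscal, basis, idop. rename x0 into i.
  destruct (Nat.leb_spec i (S N)), (Nat.leb_spec i N), (Nat.eqb_spec i (S N)); subst; try lia; Cring.
  Qed.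

Lemma trunc_0 x : trunc 0 x = vscal (x 0%nat) (basis 0).
Proof. vext. unfold trunc, vscal, basis, idop. rename x0 into i.
  destruct (Nat.leb_spec i 0), (Nat.eqb_spec i 0); subst; try lia; Cring. Qed.

Definition l2_cv (y : nat -> vec) (z : vec) := Un_cv (fun n => l2norm2 (vsub (y n) z)) 0.

Lemma l2_cv_coord y z i : (forall n, l2 (y n)) -> l2 z -> l2_cv y z ->
  Un_cv (fun n => re (y n i)) (re (z i)) /\ Un_cv (fun n => im (y n i)) (im (z i)).
Proof. intros Hy Hz H.
  split; apply Un_cv_of_sub_cv0; eapply Un_cv0_of_square_le; [|exact H| |exact H]; intros n;
  pose proof (l2_coord (vsub (y n) z) i (l2_sub _ _ (Hy n) Hz)); unfold vsub in *; Csimpl;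
  pose proof (Rle_0_sqr (re (y n i) - re (z i))); pose proof (Rle_0_sqr (im (y n i) - im (z i)));
  unfold Rsqr in *; lra. Qed.

Lemma l2_cv_trunc x : l2 x -> l2_cv (fun N => trunc N x) x.
Proof. intros H. unfold l2_cv.
  apply (Un_cv_ext (fun N => l2norm2 x - sum_f_R0 (fun n => Cnorm2 (x n)) N)).
  2: apply infinite_sum_remainder_cv0; now apply l2norm2_spec.
  intros N. symmetry. apply l2norm2_eq.
  eapply infinite_sum_ext. 2: apply infinite_sum_tail; now apply l2norm2_spec.
  intros n; unfold vsub, trunc. destruct (Nat.leb_spec n N); Csimpl; ring. Qed.

(** * Bounded linear maps and their matrices *)

Record bounded_linear (T : vec -> vec) : Prop := {
  bl_l2 : forall x, l2 x -> l2 (T x);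
  bl_add : forall x y, l2 x -> l2 y -> T (vadd x y) = vadd (T x) (T y);
  bl_scal : forall c x, l2 x -> T (vscal c x) = vscal c (T x);
  bl_bound : exists M, 0 < M /\ forall x, l2 x -> l2norm2 (T x) <= M * l2norm2 x }.

Lemma bl_sub T x y : bounded_linear T -> l2 x -> l2 y -> T (vsub x y) = vsub (T x) (T y).
Proof. intros HT Hx Hy. replace (vsub x y) with (vadd x (vscal (mkC (-1) 0) y)) by vring.
  rewrite bl_add, bl_scal; auto. vring. apply l2_scal; auto. Qed.

Lemma bl_rs T t x : bounded_linear T -> l2 x -> T (vrs t x) = vrs t (T x).
Proof. intros HT Hx. replace (vrs t x) with (vscal (mkC t 0) x) by vring.
  rewrite bl_scal; auto. vring. Qed.

Lemma bl_cont T y z : bounded_linear T -> (forall n, l2 (y n)) -> l2 z -> l2_cv y z ->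
  l2_cv (fun n => T (y n)) (T z).
Proof. intros HT Hy Hz H. destruct (bl_bound T HT) as [M [HM HMb]]. unfold l2_cv.
  apply (Un_cv0_le_scal _ (fun n => l2norm2 (vsub (y n) z)) M); auto. intros n.
  rewrite <- bl_sub; auto. split.
  apply l2norm2_nonneg, bl_l2, l2_sub; auto. apply HMb, l2_sub; auto. Qed.

Lemma bounded_linear_trunc_coord T x N i : bounded_linear T ->
  T (trunc N x) i = Cpartial_sum (fun k => Cmul (T (basis k) i) (x k)) N.
Proof. intros HT. induction N.
  - rewrite trunc_0, Cpartial_sum_0, (bl_scal T HT) by apply l2_basis. unfold vscal; Cring.
  - rewrite trunc_S, Cpartial_sum_S, (bl_add T HT), (bl_scal T HT), <- IHN;
      try apply l2_scal; try apply l2_basis; try apply l2_trunc.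
    unfold vadd, vscal; Cring. Qed.

Lemma bounded_linear_row_sum T x i : bounded_linear T -> l2 x ->
  Csum_to (fun k => Cmul (T (basis k) i) (x k)) (T x i).
Proof. intros HT Hx. destruct (l2_cv_coord (fun N => T (trunc N x)) (T x) i) as [H1 H2].
  - intros; apply bl_l2; auto; apply l2_trunc.
  - apply bl_l2; auto.
  - apply bl_cont; auto. intros; apply l2_trunc. now apply l2_cv_trunc.
  - split; [eapply Un_cv_ext; [|exact H1] | eapply Un_cv_ext; [|exact H2]]; intros n; simpl;
      rewrite bounded_linear_trunc_coord; auto. Qed.

Definition matrix_of (T : vec -> vec) : op := fun i k => T (basis k) i.

Lemma apply_matrix_of T x : bounded_linear T -> l2 x -> apply (matrix_of T) x = T x.
Proof. intros HT Hx. vext. unfold apply, matrix_of. apply Csum_eq. now apply bounded_linear_row_sum. Qed.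

Lemma bounded_matrix_of T : bounded_linear T -> bounded_op (matrix_of T).
Proof. intros HT. destruct (bl_bound T HT) as [M [HM HMb]]. exists M. intros x Hx.
  rewrite apply_matrix_of; auto. split; [|split]; auto. intros i. exists (T x i).
  now apply bounded_linear_row_sum.
  now apply bl_l2. Qed.

Lemma apply_row_sum A x i : bounded_op A -> l2 x -> Csum_to (fun j => Cmul (A i j) (x j)) (apply A x i).
Proof. intros [M HM] Hx. destruct (HM x Hx) as [H1 _]. destruct (H1 i) as [l Hl].
  unfold apply. now rewrite (Csum_eq _ l). Qed.

Lemma bounded_op_linear A : bounded_op A -> bounded_linear (apply A).
Proof. intros HA. split.
  - intros x Hx. destruct HA as [M HM]. apply (HM x Hx).
  - intros x y Hx Hy. vext. rename x0 into i. unfold apply at 1. apply Csum_eq.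
    eapply Csum_to_ext. 2: apply Csum_to_add; apply apply_row_sum; eauto.
    intros; unfold vadd; Cring.
  - intros c x Hx. vext. rename x0 into i. unfold apply at 1. apply Csum_eq.
    eapply Csum_to_ext. 2: apply Csum_to_mul; apply apply_row_sum; eauto.
    intros; unfold vscal; Cring.
  - destruct HA as [M HM]. exists (Rmax M 1). split. pose proof (Rmax_r M 1); lra.
    intros x Hx. destruct (HM x Hx) as [_ [_ H]]. pose proof (l2norm2_nonneg x Hx).
    pose proof (Rmax_l M 1). nra. Qed.

Lemma apply_basis A k : apply A (basis k) = fun j => A j k.
Proof. vext. rename x into j. unfold apply. apply Csum_eq.
  replace (A j k) with (Cpartial_sum (fun m => Cmul (A j m) (basis k m)) k).
  - apply Csum_to_eventually_zero. intros m Hm. unfold basis, idop.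
    destruct (Nat.eqb_spec m k); try lia. Cring.
  - apply C_ext; simpl; rewrite sum_f_R0_single; unfold basis, idop; try rewrite Nat.eqb_refl; Csimpl; try ring;
      intros m Hm; destruct (Nat.eqb_spec m k); try lia; Csimpl; ring. Qed.

Lemma bounded_linear_id : bounded_linear (fun x => x).
Proof. split; auto. exists 1. split. lra. intros; lra. Qed.

Lemma bounded_linear_comp S T : bounded_linear S -> bounded_linear T ->
  bounded_linear (fun x => S (T x)).
Proof. intros HS HT. destruct (bl_bound S HS) as [M1 [H1 H1b]].
  destruct (bl_bound T HT) as [M2 [H2 H2b]].
  split.
  - intros; apply bl_l2; auto; apply bl_l2; auto.
  - intros. rewrite bl_add; auto. apply bl_add; auto; apply bl_l2; auto.
  - intros. rewrite bl_scal; auto. apply bl_scal; auto; apply bl_l2; auto.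
  - exists (M1 * M2). split. nra. intros x Hx. eapply Rle_trans. apply H1b, bl_l2; auto.
    rewrite Rmult_assoc. apply Rmult_le_compat_l; auto. lra. Qed.

Lemma bounded_linear_add S T : bounded_linear S -> bounded_linear T ->
  bounded_linear (fun x => vadd (S x) (T x)).
Proof. intros HS HT. destruct (bl_bound S HS) as [M1 [H1 H1b]].
  destruct (bl_bound T HT) as [M2 [H2 H2b]].
  split.
  - intros; apply l2_add; apply bl_l2; auto.
  - intros. rewrite (bl_add S HS), (bl_add T HT); auto. vring.
  - intros. rewrite (bl_scal S HS), (bl_scal T HT); auto. vring.
  - exists (2 * (M1 + M2)). split. lra. intros x Hx. eapply Rle_trans.
    apply (l2norm2_add_le 1); try lra; apply bl_l2; auto.
    pose proof (H1b x Hx). pose proof (H2b x Hx). pose proof (l2norm2_nonneg x Hx).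
    pose proof (l2norm2_nonneg _ (bl_l2 S HS x Hx)). pose proof (l2norm2_nonneg _ (bl_l2 T HT x Hx)).
    rewrite Rinv_1. lra. Qed.

Lemma bounded_linear_rs t T : bounded_linear T -> bounded_linear (fun x => vrs t (T x)).
Proof. intros HT. destruct (bl_bound T HT) as [M1 [H1 H1b]]. split.
  - intros; apply l2_rs; apply bl_l2; auto.
  - intros. rewrite (bl_add T HT); auto. vring.
  - intros. rewrite (bl_scal T HT); auto. vring.
  - assert (Ht : 0 <= t * t) by apply Rle_0_sqr.
    exists (t * t * M1 + 1). split. nra. intros x Hx.
    rewrite l2norm2_rs by (apply bl_l2; auto). pose proof (H1b x Hx). pose proof (l2norm2_nonneg x Hx).
    apply Rle_trans with (t * t * (M1 * l2norm2 x)). apply Rmult_le_compat_l; auto. lra. Qed.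

Lemma bounded_linear_conj T : bounded_linear T -> bounded_linear (fun x => vconj (T (vconj x))).
Proof. intros HT. destruct (bl_bound T HT) as [M1 [H1 H1b]]. split.
  - intros; apply l2_conj, bl_l2, l2_conj; auto.
  - intros. replace (vconj (vadd x y)) with (vadd (vconj x) (vconj y)) by vring.
    rewrite (bl_add T HT) by (apply l2_conj; auto). vring.
  - intros. replace (vconj (vscal c x)) with (vscal (Cconj c) (vconj x)) by vring.
    rewrite (bl_scal T HT) by (apply l2_conj; auto). vring.
  - exists M1. split; auto. intros x Hx. rewrite l2norm2_conj by (apply bl_l2, l2_conj; auto).
    rewrite <- (l2norm2_conj x) by auto. apply H1b, l2_conj; auto. Qed.

Ltac mext := apply functional_extensionality; intro; apply functional_extensionality; intro.

Lemma mul_matrix_of A B : bounded_op A -> bounded_op B ->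
  mul A B = matrix_of (fun x => apply A (apply B x)).
Proof. intros. unfold matrix_of. mext. rewrite apply_basis. reflexivity. Qed.

Lemma bounded_mul A B : bounded_op A -> bounded_op B -> bounded_op (mul A B).
Proof. intros. rewrite mul_matrix_of; auto.
  apply bounded_matrix_of, bounded_linear_comp; now apply bounded_op_linear. Qed.

Lemma apply_mul A B x : bounded_op A -> bounded_op B -> l2 x -> apply (mul A B) x = apply A (apply B x).
Proof. intros. rewrite mul_matrix_of; auto. rewrite apply_matrix_of; auto.
  apply bounded_linear_comp; now apply bounded_op_linear. Qed.

Lemma idop_matrix_of : idop = matrix_of (fun x => x).
Proof. reflexivity. Qed.

Lemma bounded_idop : bounded_op idop.
Proof. rewrite idop_matrix_of. apply bounded_matrix_of, bounded_linear_id. Qed.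

Lemma apply_idop x : l2 x -> apply idop x = x.
Proof. intros. rewrite idop_matrix_of, apply_matrix_of; auto. apply bounded_linear_id. Qed.

Lemma addop_matrix_of A B : addop A B = matrix_of (fun x => vadd (apply A x) (apply B x)).
Proof. unfold matrix_of, vadd. mext. rewrite !apply_basis. reflexivity. Qed.

Lemma bounded_addop A B : bounded_op A -> bounded_op B -> bounded_op (addop A B).
Proof. intros. rewrite addop_matrix_of.
  apply bounded_matrix_of, bounded_linear_add; now apply bounded_op_linear. Qed.

Lemma apply_addop A B x : bounded_op A -> bounded_op B -> l2 x ->
  apply (addop A B) x = vadd (apply A x) (apply B x).
Proof. intros. rewrite addop_matrix_of, apply_matrix_of; auto.
  apply bounded_linear_add; now apply bounded_op_linear. Qed.

Lemma scaleop_matrix_of r A : scaleop r A = matrix_of (fun x => vrs r (apply A x)).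
Proof. unfold matrix_of, vrs. mext. rewrite !apply_basis. reflexivity. Qed.

Lemma bounded_scaleop r A : bounded_op A -> bounded_op (scaleop r A).
Proof. intros. rewrite scaleop_matrix_of.
  apply bounded_matrix_of, bounded_linear_rs; now apply bounded_op_linear. Qed.

Lemma apply_scaleop r A x : bounded_op A -> l2 x -> apply (scaleop r A) x = vrs r (apply A x).
Proof. intros. rewrite scaleop_matrix_of, apply_matrix_of; auto.
  apply bounded_linear_rs; now apply bounded_op_linear. Qed.

Lemma vconj_basis k : vconj (basis k) = basis k.
Proof. vext. unfold vconj, basis, idop. destruct (Nat.eqb _ _); Cring. Qed.

Lemma conjop_matrix_of A : conjop A = matrix_of (fun x => vconj (apply A (vconj x))).
Proof. unfold matrix_of. mext. rewrite vconj_basis, apply_basis. reflexivity. Qed.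

Lemma bounded_conjop A : bounded_op A -> bounded_op (conjop A).
Proof. intros. rewrite conjop_matrix_of.
  apply bounded_matrix_of, bounded_linear_conj; now apply bounded_op_linear. Qed.

Lemma apply_conjop A x : bounded_op A -> l2 x -> apply (conjop A) x = vconj (apply A (vconj x)).
Proof. intros. rewrite conjop_matrix_of, apply_matrix_of; auto.
  apply bounded_linear_conj; now apply bounded_op_linear. Qed.

Lemma trans_conj_adj A : trans A = conjop (adj A).
Proof. unfold trans, conjop, adj. mext. now rewrite Cconj_involutive. Qed.

Lemma adj_conjop A : adj (conjop A) = trans A.
Proof. unfold trans, conjop, adj. mext. now rewrite Cconj_involutive. Qed.

Lemma adj_adj A : adj (adj A) = A.
Proof. unfold adj. mext. now rewrite Cconj_involutive. Qed.

Lemma inner_continuous_l u u0 y : (forall n, l2 (u n)) -> l2 u0 -> l2 y -> l2_cv u u0 ->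
  Un_cv (fun n => re (inner (u n) y)) (re (inner u0 y)) /\
  Un_cv (fun n => im (inner (u n) y)) (im (inner u0 y)).
Proof. intros Hu Hu0 Hy H. split; apply Un_cv_of_sub_cv0.
  - apply (Un_cv0_of_weighted_bound _ (fun n => l2norm2 (vsub (u n) u0)) (l2norm2 y)); auto.
    apply l2norm2_nonneg; auto.
    intros n t Ht. replace (re (inner (u n) y) - re (inner u0 y)) with (re (inner (vsub (u n) u0) y)).
    apply inner_re_bound; auto. apply l2_sub; auto. rewrite inner_sub_l; auto.
  - apply (Un_cv0_of_weighted_bound _ (fun n => l2norm2 (vsub (u n) u0)) (l2norm2 y)); auto.
    apply l2norm2_nonneg; auto.
    intros n t Ht. replace (im (inner (u n) y) - im (inner u0 y)) with (im (inner (vsub (u n) u0) y)).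
    apply inner_im_bound; auto. apply l2_sub; auto. rewrite inner_sub_l; auto. Qed.

Lemma l2_col A i : bounded_op A -> l2 (fun j => A j i).
Proof. intros HA. rewrite <- apply_basis. apply (bl_l2 _ (bounded_op_linear A HA)), l2_basis. Qed.

Lemma apply_adj_row_sum A y i : bounded_op A -> l2 y ->
  Csum_to (fun j => Cmul (adj A i j) (y j)) (apply (adj A) y i).
Proof. intros HA Hy. destruct (l2_mul_summable (vconj (fun j => A j i)) y) as [l Hl]; auto.
  apply l2_conj, l2_col; auto. unfold apply. rewrite (Csum_eq _ l); auto. Qed.

Lemma inner_trunc_adj A y z N : bounded_op A -> l2 y ->
  inner (apply A (trunc N z)) y = Cpartial_sum (fun k => Cmul (Cconj (z k)) (apply (adj A) y k)) N.
Proof. intros HA Hy. pose proof (bounded_op_linear A HA) as HB.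
  assert (Hk : forall k, inner (apply A (basis k)) y = apply (adj A) y k).
  { intros k. rewrite apply_basis. reflexivity. }
  induction N.
  - rewrite trunc_0, Cpartial_sum_0, (bl_scal _ HB), inner_scal_l, Hk; auto using l2_basis.
    apply (bl_l2 _ HB), l2_basis.
  - rewrite trunc_S, Cpartial_sum_S, (bl_add _ HB), inner_add_l, IHN, (bl_scal _ HB), inner_scal_l, Hk;
      auto using l2_basis, l2_trunc, l2_scal; try apply (bl_l2 _ HB); auto using l2_basis, l2_trunc, l2_scal.
      Qed.

Lemma l2norm2_trunc N v : l2norm2 (trunc N v) = sum_f_R0 (fun n => Cnorm2 (v n)) N.
Proof. apply l2norm2_eq.
  replace (sum_f_R0 (fun n => Cnorm2 (v n)) N) with (sum_f_R0 (fun n => Cnorm2 (trunc N v n)) N).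
  apply infinite_sum_eventually_zero.
  intros k Hk; unfold trunc; destruct (Nat.leb_spec k N); try lia; Csimpl; ring.
  apply sum_eq; intros k Hk; unfold trunc; destruct (Nat.leb_spec k N); try lia; auto. Qed.

(* With [v = A^dagger y], [|trunc N v|^2 = Re <A (trunc N v), y>], which bounds the partial sums of [|v|^2]. *)
Lemma apply_adj_bound A : bounded_op A -> exists M, 0 < M /\ forall y, l2 y ->
  l2 (apply (adj A) y) /\ l2norm2 (apply (adj A) y) <= M * l2norm2 y.
Proof. intros HA. pose proof (bounded_op_linear A HA) as HB. destruct (bl_bound _ HB) as [M [HM HMb]].
  exists M. split; auto. intros y Hy. set (v := apply (adj A) y). apply l2_of_bound. intros N.
  set (S := sum_f_R0 (fun n => Cnorm2 (v n)) N).
  assert (E : re (inner (apply A (trunc N v)) y) = S).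
  { rewrite inner_trunc_adj; auto. simpl. apply sum_eq. intros; fold v; Csimpl; ring. }
  assert (HS0 : 0 <= S) by (apply sum_f_R0_nonneg; intros; apply Cnorm2_nonneg).
  pose proof (inner_re_bound (/ M) (apply A (trunc N v)) y) as Hb.
  rewrite E, Rinv_inv in Hb. pose proof (HMb (trunc N v) (l2_trunc N v)).
  rewrite l2norm2_trunc in H. fold S in H. pose proof (Rle_abs S).
  assert (HMi : 0 < / M) by (apply Rinv_0_lt_compat; auto).
  specialize (Hb HMi (bl_l2 _ HB _ (l2_trunc N v)) Hy).
  assert (/ M * l2norm2 (apply A (trunc N v)) <= S).
  { apply Rle_trans with (/ M * (M * S)). apply Rmult_le_compat_l; lra. right; field; lra. }
  lra. Qed.

Lemma bounded_adj A : bounded_op A -> bounded_op (adj A).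
Proof. intros HA. destruct (apply_adj_bound A HA) as [M [HM H]]. exists M. intros y Hy.
  destruct (H y Hy). split; auto. intros i. eexists. apply apply_adj_row_sum; auto. Qed.

Lemma bounded_trans A : bounded_op A -> bounded_op (trans A).
Proof. intros. rewrite trans_conj_adj. apply bounded_conjop, bounded_adj; auto. Qed.

Lemma inner_adj A x y : bounded_op A -> l2 x -> l2 y ->
  inner (apply A x) y = inner x (apply (adj A) y).
Proof. intros HA Hx Hy. pose proof (bounded_op_linear A HA) as HB. symmetry. apply inner_eq.
  destruct (inner_continuous_l (fun N => apply A (trunc N x)) (apply A x) y) as [H1 H2]; auto.
  - intros; apply (bl_l2 _ HB), l2_trunc.
  - apply (bl_l2 _ HB); auto.
  - apply bl_cont; auto. intros; apply l2_trunc. now apply l2_cv_trunc.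
  - split; [eapply Un_cv_ext; [|exact H1] | eapply Un_cv_ext; [|exact H2]]; intros n; simpl;
      rewrite inner_trunc_adj; auto. Qed.

(** * Completeness and the contraction principle *)

Lemma l2_cv_unique y z1 z2 : (forall n, l2 (y n)) -> l2 z1 -> l2 z2 ->
  l2_cv y z1 -> l2_cv y z2 -> z1 = z2.
Proof.
  intros Hy H1 H2 C1 C2. vext. rename x into i.
  destruct (l2_cv_coord y z1 i) as [R1 I1], (l2_cv_coord y z2 i) as [R2 I2]; auto.
  apply C_ext; eapply UL_sequence; eauto.
Qed.

Lemma l2_cv_shift y z : l2_cv y z -> l2_cv (fun n => y (S n)) z.
Proof. intros H e He. destruct (H e He) as [N HN]. exists N. intros; apply HN; lia. Qed.

Lemma coord_cv_of_geometric (ys : nat -> vec) q B i : 0 <= q < 1 -> 0 <= B ->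
  (forall n, l2 (ys n)) ->
  (forall n m, (n <= m)%nat -> l2norm2 (vsub (ys m) (ys n)) <= q ^ n * B) ->
  (exists l, Un_cv (fun n => re (ys n i)) l) /\ (exists l, Un_cv (fun n => im (ys n i)) l).
Proof.
  intros Hq HB Hl HC.
  assert (Hcoord : forall N n m, (N <= n)%nat -> (N <= m)%nat ->
    Cnorm2 (vsub (ys m) (ys n) i) <= q ^ N * B).
  { intros N n m Hn Hm.
    assert (Hpow : forall k, (N <= k)%nat -> q ^ k * B <= q ^ N * B)
      by (intros; apply Rmult_le_compat_r; [| apply pow_le_decr]; auto; lra).
    eapply Rle_trans; [apply l2_coord, l2_sub; auto |].
    destruct (Nat.le_ge_cases n m).
    - eapply Rle_trans; [apply HC |]; auto.
    - rewrite l2norm2_sub_comm by auto. eapply Rle_trans; [apply HC |]; auto. }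
  split; [destruct (R_complete (fun n => re (ys n i))) as [l Hl'] |
          destruct (R_complete (fun n => im (ys n i))) as [l Hl']]; eauto;
    apply (Cauchy_crit_geometric _ q B); auto;
    intros N n m Hn Hm; pose proof (Hcoord N n m Hn Hm) as Hi; unfold vsub, Cnorm2 in Hi; simpl in Hi;
    [pose proof (Rle_0_sqr (im (ys m i) - im (ys n i))) | pose proof (Rle_0_sqr (re (ys m i) - re (ys n i)))];
    unfold Rsqr in *; lra.
Qed.

Lemma l2_complete_geometric (ys : nat -> vec) q B : 0 <= q < 1 -> 0 <= B ->
  (forall n, l2 (ys n)) ->
  (forall n m, (n <= m)%nat -> l2norm2 (vsub (ys m) (ys n)) <= q ^ n * B) ->
  exists y, l2 y /\ l2_cv ys y.
Proof.
  intros Hq HB Hl HC.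
  pose proof (fun i => coord_cv_of_geometric ys q B i Hq HB Hl HC) as Hcv.
  set (ystar := fun i => mkC (epsilon (inhabits 0) (fun l => Un_cv (fun n => re (ys n i)) l))
                             (epsilon (inhabits 0) (fun l => Un_cv (fun n => im (ys n i)) l))).
  assert (Yre : forall i, Un_cv (fun n => re (ys n i)) (re (ystar i)))
    by (intros i; apply (epsilon_spec (inhabits 0) _ (proj1 (Hcv i)))).
  assert (Yim : forall i, Un_cv (fun n => im (ys n i)) (im (ystar i)))
    by (intros i; apply (epsilon_spec (inhabits 0) _ (proj2 (Hcv i)))).
  assert (Bn : forall n, l2 (vsub (ys n) ystar) /\ l2norm2 (vsub (ys n) ystar) <= q ^ n * B).
  { intros n. apply l2_of_bound. intros M.
    apply (@Rle_cv_lim (fun m => sum_f_R0 (fun i => Cnorm2 (vsub (ys n) (ys (m + n)%nat) i)) M)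
                       (fun _ => q ^ n * B)).
    - intros m. eapply Rle_trans. apply l2_partial, l2_sub; auto.
      rewrite l2norm2_sub_comm by auto. apply HC. lia.
    - apply Un_cv_sum_f_R0. intros i.
      apply (Un_cv_Cnorm2_sub (fun m => ys (m + n)%nat i) (ystar i) (ys n i)).
      + exact (CV_shift' (fun m => re (ys m i)) n _ (Yre i)).
      + exact (CV_shift' (fun m => im (ys m i)) n _ (Yim i)).
    - apply Un_cv_const. }
  exists ystar. split.
  - replace ystar with (vsub (ys 0%nat) (vsub (ys 0%nat) ystar)) by vring.
    apply l2_sub; auto. apply Bn.
  - apply (Un_cv0_le_scal _ (fun n => q ^ n * B) 1).
    + intros n. split. apply l2norm2_nonneg, Bn. rewrite Rmult_1_l; apply Bn.
    + apply Un_cv_pow_mul; lra.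
Qed.

Section Contraction.

Variables (F : vec -> vec) (q : R).
Hypothesis q_bounds : 0 < q < 1.
Hypothesis F_l2 : forall y, l2 y -> l2 (F y).
Hypothesis F_contraction : forall y1 y2, l2 y1 -> l2 y2 ->
  l2norm2 (vsub (F y1) (F y2)) <= q * l2norm2 (vsub y1 y2).

Definition iterates (n : nat) : vec := Nat.iter n F vzero.

Lemma l2_iterates n : l2 (iterates n).
Proof. induction n; simpl. apply l2_zero. apply F_l2; auto. Qed.

Lemma iterates_dist_contract n k :
  l2norm2 (vsub (iterates (n + k)) (iterates n)) <= q ^ n * l2norm2 (vsub (iterates k) (iterates 0)).
Proof.
  induction n.
  - rewrite pow_O, Rmult_1_l. apply Rle_refl.
  - change (iterates (S n + k)) with (F (iterates (n + k))).
    change (iterates (S n)) with (F (iterates n)). rewrite <- tech_pow_Rmult.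
    eapply Rle_trans. apply F_contraction; apply l2_iterates.
    rewrite Rmult_assoc. apply Rmult_le_compat_l; lra.
Qed.

Lemma iterates_dist_origin_bounded : exists B, 0 <= B /\
  forall k, l2norm2 (vsub (iterates k) (iterates 0)) <= B.
Proof.
  set (D1 := l2norm2 (vsub (iterates 1) (iterates 0))).
  assert (HD1 : 0 <= D1) by (apply l2norm2_nonneg, l2_sub; apply l2_iterates).
  set (s := (1 - q) / (2 * q)).
  assert (Hs : 0 < s) by (unfold s; apply Rdiv_lt_0_compat; lra).
  set (c := 1 + / s).
  assert (Hc : 0 < c) by (unfold c; pose proof (Rinv_0_lt_compat s Hs); lra).
  (* [B] is the fixed point of [B = (1 + s) q B + c D1], and [(1 + s) q < 1] *)
  set (B := c * D1 / ((1 - q) / 2)).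
  assert (HB : 0 <= B) by (unfold B; apply Rmult_le_pos; [nra | apply Rlt_le, Rinv_0_lt_compat; lra]).
  exists B. split; auto. induction k.
  - replace (vsub (iterates 0) (iterates 0)) with vzero by vring. rewrite l2norm2_zero. lra.
  - replace (vsub (iterates (S k)) (iterates 0))
      with (vadd (vsub (iterates (S k)) (iterates 1)) (vsub (iterates 1) (iterates 0))) by vring.
    eapply Rle_trans. apply (l2norm2_add_le s); auto using l2_sub, l2_iterates.
    apply Rle_trans with ((1 + s) * (q * B) + c * D1).
    + apply Rplus_le_compat_r, Rmult_le_compat_l. lra.
      change (iterates (S k)) with (F (iterates k)). change (iterates 1) with (F (iterates 0)).
      eapply Rle_trans. apply F_contraction; apply l2_iterates. apply Rmult_le_compat_l; lra.
    + right. unfold B, s, c. field. lra.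
Qed.

Lemma contraction_fixpoint : exists y, l2 y /\ F y = y.
Proof.
  destruct iterates_dist_origin_bounded as [B [HB HBk]].
  destruct (l2_complete_geometric iterates q B) as [y [Hy Hcv]]; auto using l2_iterates; try lra.
  { intros n m Hnm. replace m with (n + (m - n))%nat by lia.
    eapply Rle_trans. apply iterates_dist_contract.
    apply Rmult_le_compat_l; auto. apply pow_le; lra. }
  exists y. split; auto.
  apply (l2_cv_unique (fun n => F (iterates n))); auto using l2_iterates.
  - apply (Un_cv0_le_scal _ (fun n => l2norm2 (vsub (iterates n) y)) q); auto.
    intros n. split. apply l2norm2_nonneg, l2_sub; auto using l2_iterates.
    apply F_contraction; auto using l2_iterates.
  - exact (l2_cv_shift iterates y Hcv).
Qed.

End Contraction.

(** * Inverses of bounded linear maps *)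

Definition has_bounded_inverse (T : vec -> vec) : Prop :=
  exists S, bounded_linear S /\ (forall x, l2 x -> T (S x) = x) /\ (forall x, l2 x -> S (T x) = x).

Lemma has_bounded_inverse_ext T1 T2 : (forall x, l2 x -> T1 x = T2 x) ->
  has_bounded_inverse T1 -> has_bounded_inverse T2.
Proof.
  intros E [S [HS [H1 H2]]]. exists S. split; [auto | split]; intros x Hx.
  - rewrite <- E by (apply (bl_l2 _ HS); auto). auto.
  - rewrite <- E by auto. auto.
Qed.

Lemma bounded_linear_of_inverse T S : bounded_linear T -> (forall x, l2 x -> l2 (S x)) ->
  (exists K, 0 < K /\ forall x, l2 x -> l2norm2 (S x) <= K * l2norm2 x) ->
  (forall x, l2 x -> T (S x) = x) -> (forall x, l2 x -> S (T x) = x) ->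
  bounded_linear S.
Proof.
  intros HT Hl HK H1 H2. split; auto.
  - intros x y Hx Hy. rewrite <- (H1 x Hx) at 1. rewrite <- (H1 y Hy) at 1.
    rewrite <- (bl_add _ HT) by auto. apply H2. apply l2_add; auto.
  - intros c x Hx. rewrite <- (H1 x Hx) at 1. rewrite <- (bl_scal _ HT) by auto.
    apply H2. apply l2_scal; auto.
Qed.

Lemma matrix_of_ext T1 T2 : (forall x, l2 x -> T1 x = T2 x) -> matrix_of T1 = matrix_of T2.
Proof. intros E. unfold matrix_of. mext. rewrite E; auto using l2_basis. Qed.

Lemma bounded_invertible_of_has_bounded_inverse A :
  bounded_op A -> has_bounded_inverse (apply A) -> bounded_invertible A.
Proof.
  intros HA [S [HS [H1 H2]]]. pose proof (bounded_op_linear A HA) as HB.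
  exists (matrix_of S).
  split; [| split]; [apply bounded_matrix_of; auto | |];
    rewrite mul_matrix_of, idop_matrix_of by (auto; apply bounded_matrix_of; auto);
    apply matrix_of_ext; intros x Hx; rewrite apply_matrix_of; auto.
  apply (bl_l2 _ HB); auto.
Qed.

Section Coercive.

Variables (Z : vec -> vec) (d : R).
Hypothesis Z_linear : bounded_linear Z.
Hypothesis d_pos : 0 < d.
Hypothesis Z_coercive : forall y, l2 y -> d * l2norm2 y <= re (inner (Z y) y).

Lemma l2norm2_sub_coercive_le t M v : 0 < t -> t * t * M <= t * d ->
  (forall x, l2 x -> l2norm2 (Z x) <= M * l2norm2 x) -> l2 v ->
  l2norm2 (vsub v (vrs t (Z v))) <= (1 - t * d) * l2norm2 v.
Proof.
  intros Ht Htd HM Hv. assert (HZv := bl_l2 _ Z_linear _ Hv).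
  rewrite l2norm2_sub, l2norm2_rs by (auto; apply l2_rs; auto).
  rewrite (inner_conj_sym (vrs t (Z v)) v), inner_rs_l by (auto; apply l2_rs; auto). simpl.
  pose proof (Z_coercive v Hv). pose proof (HM v Hv). pose proof (l2norm2_nonneg v Hv).
  assert (t * t * l2norm2 (Z v) <= t * d * l2norm2 v).
  { apply Rle_trans with (t * t * (M * l2norm2 v)). apply Rmult_le_compat_l. nra. auto.
    rewrite <- Rmult_assoc. apply Rmult_le_compat_r; auto. }
  assert (t * (d * l2norm2 v) <= t * re (inner (Z v) v)) by (apply Rmult_le_compat_l; lra).
  nra.
Qed.

(* Richardson iteration: for small [t], [y |-> y + t (b - Z y)] is a contraction fixing the solutions. *)
Lemma coercive_surjective b : l2 b -> exists y, l2 y /\ Z y = b.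
Proof.
  intros Hb. destruct (bl_bound Z Z_linear) as [M [HM HMb]].
  set (t := d / (M + d + 1)). assert (Ht : 0 < t) by (unfold t; apply Rdiv_lt_0_compat; lra).
  assert (Htd : t * t * M <= t * d).
  { apply Rle_trans with (t * t * (M + d + 1)). apply Rmult_le_compat_l; nra.
    right. unfold t; field; lra. }
  set (F := fun y => vadd y (vrs t (vsub b (Z y)))).
  set (q := Rmax (1 - t * d) (1/2)).
  assert (Hq : 0 < q < 1).
  { split. apply Rlt_le_trans with (1/2). lra. apply Rmax_r. apply Rmax_lub_lt; try lra.
    assert (0 < t * d) by (apply Rmult_lt_0_compat; auto). lra. }
  destruct (contraction_fixpoint F q) as [y [Hy HFy]]; auto.
  - intros y Hy. unfold F. apply l2_add; auto. apply l2_rs, l2_sub; auto. apply (bl_l2 _ Z_linear); auto.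
  - intros y1 y2 H1 H2.
    replace (vsub (F y1) (F y2)) with (vsub (vsub y1 y2) (vrs t (vsub (Z y1) (Z y2))))
      by (unfold F; vring).
    rewrite <- (bl_sub Z) by auto.
    eapply Rle_trans. apply (l2norm2_sub_coercive_le t M); auto. apply l2_sub; auto.
    apply Rmult_le_compat_r. apply l2norm2_nonneg, l2_sub; auto. apply Rmax_l.
  - exists y. split; auto. vext. rename x into i.
    pose proof (f_equal (fun w => re (w i)) HFy) as E1.
    pose proof (f_equal (fun w => im (w i)) HFy) as E2.
    unfold F, vadd, vrs, vsub in E1, E2; Csimpl.
    apply C_ext; apply (Rmult_eq_reg_l t); lra.
Qed.

Lemma coercive_injective w1 w2 : l2 w1 -> l2 w2 -> Z w1 = Z w2 -> w1 = w2.
Proof.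
  intros H1 H2 E. assert (Hv : l2 (vsub w1 w2)) by (apply l2_sub; auto).
  assert (E2 : Z (vsub w1 w2) = vzero) by (rewrite (bl_sub Z), E by auto; vring).
  pose proof (Z_coercive _ Hv) as Hc. rewrite E2, inner_zero_l in Hc by auto. simpl in Hc.
  assert (H0 : vsub w1 w2 = vzero)
    by (apply l2norm2_zero_inv; auto; pose proof (l2norm2_nonneg _ Hv); nra).
  vext. pose proof (f_equal (fun w => re (w x)) H0). pose proof (f_equal (fun w => im (w x)) H0).
  unfold vsub, vzero in *; Csimpl. apply C_ext; lra.
Qed.

Lemma l2norm2_le_coercive w : l2 w -> l2norm2 w <= / (d * d) * l2norm2 (Z w).
Proof.
  intros Hw. assert (HZw := bl_l2 _ Z_linear _ Hw).
  pose proof (Z_coercive w Hw) as Hc. rewrite re_inner_sym in Hc by auto.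
  pose proof (inner_re_bound d w (Z w) d_pos Hw HZw). pose proof (Rle_abs (re (inner w (Z w)))).
  apply (Rmult_le_reg_l (d * d)); [nra |].
  replace (d * d * (/ (d * d) * l2norm2 (Z w))) with (l2norm2 (Z w)) by (field; lra).
  apply (Rmult_le_reg_l (/ d)); [apply Rinv_0_lt_compat; lra |].
  replace (/ d * (d * d * l2norm2 w)) with (d * l2norm2 w) by (field; lra). lra.
Qed.

Lemma coercive_has_bounded_inverse : has_bounded_inverse Z.
Proof.
  set (W := fun b => epsilon (inhabits vzero) (fun w => l2 w /\ Z w = b)).
  assert (HW : forall b, l2 b -> l2 (W b) /\ Z (W b) = b)
    by (intros b Hb; apply (epsilon_spec (inhabits vzero) (fun w => l2 w /\ Z w = b));
        apply coercive_surjective; auto).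
  assert (HZW : forall y, l2 y -> W (Z y) = y)
    by (intros y Hy; apply coercive_injective; auto; apply HW; apply (bl_l2 _ Z_linear); auto).
  exists W. split; [| split].
  - apply (bounded_linear_of_inverse Z); auto.
    + intros b Hb. apply HW; auto.
    + exists (/ (d * d)). split. apply Rinv_0_lt_compat; nra.
      intros b Hb. destruct (HW b Hb) as [Hw HZw]. rewrite <- HZw at 2. apply l2norm2_le_coercive; auto.
    + intros b Hb. apply HW; auto.
  - intros b Hb. apply HW; auto.
  - exact HZW.
Qed.

End Coercive.

Definition one_sub (c : R) (T : vec -> vec) : vec -> vec :=
  fun x => vadd x (vrs (-1) (vrs c (T x))).

Lemma apply_one_sub c A x : bounded_op A -> l2 x ->
  apply (subop idop (scaleop c A)) x = one_sub c (apply A) x.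
Proof.
  intros HA Hx. unfold subop, one_sub.
  rewrite apply_addop, apply_idop, !apply_scaleop; auto;
    try apply bounded_scaleop; auto using bounded_idop, bounded_scaleop.
Qed.

(* [(1 - c U P)^-1 = 1 + c U (1 - c P U)^-1 P]. *)
Lemma has_bounded_inverse_one_sub_comm c U P : bounded_linear U -> bounded_linear P ->
  has_bounded_inverse (one_sub c (fun x => P (U x))) ->
  has_bounded_inverse (one_sub c (fun x => U (P x))).
Proof.
  intros HU HP [W [HW [HW1 HW2]]].
  assert (HPU : bounded_linear (fun x => P (U x))) by (apply bounded_linear_comp; auto).
  assert (HP_one_sub : forall b, l2 b ->
    P (one_sub c (fun x => U (P x)) b) = one_sub c (fun x => P (U x)) (P b)).
  { intros b Hb. unfold one_sub.
    rewrite (bl_add P HP), !(bl_rs P); auto; repeat apply l2_rs;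
      repeat apply (bl_l2 _ HU); apply (bl_l2 _ HP); auto. }
  exists (fun b => vadd b (vrs c (U (W (P b))))). split; [| split].
  - apply bounded_linear_add; [apply bounded_linear_id |].
    apply bounded_linear_rs, (bounded_linear_comp U (fun b => W (P b))), bounded_linear_comp; auto.
  - intros b Hb. set (w := W (P b)).
    assert (Hw : l2 w) by (apply (bl_l2 _ HW), (bl_l2 _ HP); auto).
    assert (HUw := bl_l2 _ HU _ Hw).
    assert (HPS : P (vadd b (vrs c (U w))) = w).
    { rewrite (bl_add P HP), (bl_rs P) by (auto; apply l2_rs; auto).
      rewrite <- (HW1 (P b)) at 1 by (apply (bl_l2 _ HP); auto). fold w. unfold one_sub. vring. }
    unfold one_sub at 1. rewrite HPS. vring.
  - intros b Hb. rewrite HP_one_sub, HW2 by (auto; apply (bl_l2 _ HP); auto).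
    unfold one_sub. vring.
Qed.

(** * Sandwiched projections *)

Record orth_projection (P : vec -> vec) : Prop := {
  proj_linear : bounded_linear P;
  proj_idem : forall x, l2 x -> P (P x) = P x;
  proj_selfadjoint : forall x y, l2 x -> l2 y -> inner (P x) y = inner x (P y) }.

Lemma l2norm2_proj_le P v : orth_projection P -> l2 v -> l2norm2 (P v) <= l2norm2 v.
Proof.
  intros [HP Hi Hs] Hv. assert (HPv := bl_l2 _ HP _ Hv).
  assert (E : l2norm2 (P v) = re (inner v (P v))).
  { rewrite <- Hi at 2 by auto. rewrite <- Hs by auto. rewrite inner_self; auto. }
  pose proof (inner_re_bound 1 v (P v) Rlt_0_1 Hv HPv). rewrite Rinv_1 in H.
  pose proof (Rle_abs (re (inner v (P v)))). lra.
Qed.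

Definition strict_contraction (T : vec -> vec) : Prop :=
  exists a, 0 <= a < 1 /\ forall x, l2 x -> l2norm2 (T x) <= a * l2norm2 x.

Section Sandwich.

Variables (eps : R) (A Ad P Q : vec -> vec).
Hypothesis eps_sign : eps = 1 \/ eps = -1.
Hypothesis A_linear : bounded_linear A.
Hypothesis Ad_linear : bounded_linear Ad.
Hypothesis A_adjoint : forall x y, l2 x -> l2 y -> inner (A x) y = inner x (Ad y).
Hypothesis P_proj : orth_projection P.
Hypothesis Q_proj : orth_projection Q.
Hypothesis A_contraction : eps = 1 -> strict_contraction A.

Let U := fun y => Ad (Q (A (P y))).

Lemma bounded_linear_sandwich : bounded_linear U.
Proof.
  apply (bounded_linear_comp Ad (fun y => Q (A (P y)))), (bounded_linear_comp Q (fun y => A (P y))),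
    bounded_linear_comp; auto using proj_linear.
Qed.

Lemma re_inner_one_sub_sandwich y : l2 y ->
  re (inner (one_sub eps (fun x => P (U x)) y) y) = l2norm2 y - eps * l2norm2 (Q (A (P y))).
Proof.
  intros Hy. destruct P_proj as [HP HPi HPs], Q_proj as [HQ HQi HQs].
  assert (Hpy := bl_l2 _ HP _ Hy). assert (Hapy := bl_l2 _ A_linear _ Hpy).
  assert (Hqapy := bl_l2 _ HQ _ Hapy).
  assert (HUy := bl_l2 _ bounded_linear_sandwich _ Hy). assert (HPUy := bl_l2 _ HP _ HUy).
  assert (E : inner (A (P y)) (Q (A (P y))) = mkC (l2norm2 (Q (A (P y)))) 0)
    by (rewrite <- (inner_self (Q (A (P y)))), HQs, HQi; auto).
  unfold one_sub. rewrite inner_add_l, !inner_rs_l, inner_self; auto; repeat apply l2_rs; auto.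
  rewrite HPs by auto. unfold U.
  rewrite (inner_conj_sym (P y) (Ad (Q (A (P y))))) by (auto; apply (bl_l2 _ Ad_linear); auto).
  rewrite <- A_adjoint, E by auto. simpl. ring.
Qed.

Lemma one_sub_sandwich_coercive : exists d, 0 < d /\
  forall y, l2 y -> d * l2norm2 y <= re (inner (one_sub eps (fun x => P (U x)) y) y).
Proof.
  assert (Hl2 : forall y, l2 y -> l2 (P y) /\ l2 (A (P y)) /\ l2 (Q (A (P y)))).
  { intros y Hy. destruct P_proj as [HP _ _], Q_proj as [HQ _ _].
    repeat split; repeat (apply (bl_l2 _ HQ) || apply (bl_l2 _ A_linear) || apply (bl_l2 _ HP)); auto. }
  destruct eps_sign as [E | E].
  - destruct (A_contraction E) as [a [Ha Hab]]. exists (1 - a). split. lra.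
    intros y Hy. rewrite re_inner_one_sub_sandwich, E by auto.
    destruct (Hl2 y Hy) as [Hpy [Hapy _]].
    pose proof (l2norm2_proj_le Q _ Q_proj Hapy). pose proof (Hab _ Hpy).
    pose proof (l2norm2_proj_le P _ P_proj Hy). pose proof (l2norm2_nonneg _ Hy). nra.
  - exists 1. split. lra. intros y Hy. rewrite re_inner_one_sub_sandwich, E by auto.
    pose proof (l2norm2_nonneg _ (proj2 (proj2 (Hl2 y Hy)))). lra.
Qed.

Lemma has_bounded_inverse_one_sub_sandwich : has_bounded_inverse (one_sub eps U).
Proof.
  destruct P_proj as [HP HPi _].
  apply (has_bounded_inverse_ext (one_sub eps (fun x => U (P x)))).
  { intros x Hx. unfold one_sub, U. rewrite HPi; auto. }
  apply has_bounded_inverse_one_sub_comm; auto using bounded_linear_sandwich.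
  destruct one_sub_sandwich_coercive as [d [Hd Hco]].
  apply (coercive_has_bounded_inverse _ d); auto.
  apply bounded_linear_add; [apply bounded_linear_id |].
  repeat apply bounded_linear_rs. apply bounded_linear_comp; auto using bounded_linear_sandwich.
Qed.

End Sandwich.

Lemma orth_projection_apply P : orth_projector P -> orth_projection (apply P).
Proof.
  intros [HP [HPP HaP]]. split.
  - apply bounded_op_linear; auto.
  - intros. rewrite <- apply_mul, HPP; auto.
  - intros. rewrite inner_adj, HaP; auto.
Qed.

Lemma orth_projection_apply_trans P : orth_projector P -> orth_projection (apply (trans P)).
Proof.
  intros HPr. pose proof HPr as [HP [_ HaP]]. destruct (orth_projection_apply P HPr) as [BP Pi _].
  assert (EtP : trans P = conjop P) by (rewrite trans_conj_adj, HaP; auto).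
  split.
  - apply bounded_op_linear, bounded_trans; auto.
  - intros x Hx. rewrite EtP.
    assert (HPx : l2 (vconj (apply P (vconj x)))) by (apply l2_conj, (bl_l2 _ BP), l2_conj; auto).
    rewrite (apply_conjop P x), (apply_conjop P _), vconj_involutive, Pi; auto using l2_conj.
  - assert (E : adj (trans P) = trans P) by (rewrite EtP at 2; reflexivity).
    intros. rewrite inner_adj, E by (auto; apply bounded_trans; auto). reflexivity.
Qed.

Lemma adj_strict_contraction A : bounded_op A ->
  strict_contraction (apply A) -> strict_contraction (apply (adj A)).
Proof.
  intros HA [a [Ha Hb]]. exists (/ (2 - a)). split.
  { split. apply Rlt_le, Rinv_0_lt_compat; lra.
    rewrite <- Rinv_1. apply Rinv_lt_contravar; lra. }
  intros v Hv. pose proof (bounded_op_linear _ (bounded_adj A HA)) as HB. set (w := apply (adj A) v).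
  assert (Hw : l2 w) by (apply (bl_l2 _ HB); auto).
  assert (HAw : l2 (apply A w)) by (apply (bl_l2 _ (bounded_op_linear A HA)); auto).
  assert (E : l2norm2 w = re (inner (apply A w) v))
    by (rewrite inner_adj by auto; fold w; rewrite inner_self; auto).
  pose proof (inner_re_bound 1 _ _ Rlt_0_1 HAw Hv). rewrite Rinv_1 in H.
  pose proof (Rle_abs (re (inner (apply A w) v))). pose proof (Hb w Hw).
  apply (Rmult_le_reg_l (2 - a)). lra.
  replace ((2 - a) * (/ (2 - a) * l2norm2 v)) with (l2norm2 v) by (field; lra). lra.
Qed.

Lemma bounded_invertible_one_sub_sandwich (eps : R) (A P Q : op) :
  (eps = 1 \/ eps = -1) -> bounded_op A ->
  orth_projection (apply P) -> orth_projection (apply Q) -> bounded_op P -> bounded_op Q ->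
  (eps = 1 -> strict_contraction (apply A)) ->
  bounded_invertible (subop idop (scaleop eps (mul (mul (mul (adj A) Q) A) P))).
Proof.
  intros Heps HA HPp HQp HP HQ Hcontr.
  assert (HaA := bounded_adj A HA).
  assert (HY : bounded_op (mul (mul (mul (adj A) Q) A) P)) by (repeat apply bounded_mul; auto).
  apply bounded_invertible_of_has_bounded_inverse.
  { unfold subop. apply bounded_addop, bounded_scaleop, bounded_scaleop; auto using bounded_idop. }
  apply (has_bounded_inverse_ext
           (one_sub eps (fun x => apply (adj A) (apply Q (apply A (apply P x)))))).
  - intros x Hx. rewrite apply_one_sub by auto. unfold one_sub.
    rewrite !apply_mul; repeat apply bounded_mul; auto;
      repeat (apply (bl_l2 _ (bounded_op_linear _ HA)) || apply (bl_l2 _ (bounded_op_linear _ HP))); auto.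
  - apply has_bounded_inverse_one_sub_sandwich; auto using bounded_op_linear.
    intros. apply inner_adj; auto.
Qed.

Lemma l2norm2_apply_of_adj_mul eps A B y : bounded_op A -> bounded_op B -> l2 y ->
  mul (adj A) A = addop idop (scaleop eps (mul (adj B) B)) ->
  l2norm2 (apply A y) = l2norm2 y + eps * l2norm2 (apply B y).
Proof.
  intros HA HB Hy E.
  assert (HAy := bl_l2 _ (bounded_op_linear _ HA) _ Hy).
  assert (HBy := bl_l2 _ (bounded_op_linear _ HB) _ Hy).
  assert (HaBBy := bl_l2 _ (bounded_op_linear _ (bounded_adj _ HB)) _ HBy).
  assert (EA : apply (adj A) (apply A y) = vadd y (vrs eps (apply (adj B) (apply B y)))).
  { rewrite <- apply_mul, E by auto using bounded_adj.
    rewrite apply_addop, apply_idop, apply_scaleop, apply_mul;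
      auto using bounded_idop, bounded_adj, bounded_mul, bounded_scaleop. }
  transitivity (re (inner (apply A y) (apply A y))). rewrite inner_self; auto.
  rewrite inner_adj, EA by auto.
  rewrite re_inner_sym, inner_add_l, inner_rs_l by (auto; try apply l2_add; try apply l2_rs; auto).
  simpl. rewrite (re_inner_sym (apply (adj B) (apply B y)) y), <- inner_adj by auto.
  rewrite !inner_self by auto. simpl. ring.
Qed.

Lemma strict_contraction_of_l2norm2_split (S T : vec -> vec) M : 0 < M ->
  (forall x, l2 x -> l2 (S x)) ->
  (forall x, l2 x -> l2norm2 x <= M * l2norm2 (S x)) ->
  (forall x, l2 x -> l2norm2 x = l2norm2 (S x) + l2norm2 (T x)) ->
  strict_contraction T.
Proof.
  intros HM HS Hlow Hsplit. exists (1 - / (M + 1)).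
  assert (HM1 : 0 < / (M + 1) < 1).
  { split. apply Rinv_0_lt_compat; lra. rewrite <- Rinv_1. apply Rinv_lt_contravar; lra. }
  split. lra. intros x Hx.
  pose proof (Hsplit x Hx). pose proof (Hlow x Hx). pose proof (l2norm2_nonneg _ (HS x Hx)).
  assert (l2norm2 x * / (M + 1) <= l2norm2 (S x)).
  { apply (Rmult_le_reg_l (M + 1)). lra.
    replace ((M + 1) * (l2norm2 x * / (M + 1))) with (l2norm2 x) by (field; lra). nra. }
  nra.
Qed.

Lemma l2norm2_split_right_inverse eps A Ainv B x :
  bounded_op A -> bounded_op Ainv -> bounded_op B -> mul A Ainv = idop ->
  mul (adj A) A = addop idop (scaleop eps (mul (adj B) B)) -> l2 x ->
  l2norm2 x = l2norm2 (apply Ainv x) + eps * l2norm2 (apply (mul B Ainv) x).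
Proof.
  intros HA HAi HB HAAi E Hx.
  rewrite <- (apply_idop x), <- HAAi, apply_mul at 1 by auto.
  rewrite apply_mul by auto.
  apply l2norm2_apply_of_adj_mul; auto. apply (bl_l2 _ (bounded_op_linear _ HAi)); auto.
Qed.

Lemma strict_contraction_mul_right_inverse A Ainv B :
  bounded_op A -> bounded_op Ainv -> bounded_op B -> mul A Ainv = idop ->
  mul (adj A) A = addop idop (scaleop 1 (mul (adj B) B)) ->
  strict_contraction (apply (mul B Ainv)).
Proof.
  intros HA HAi HB HAAi E. destruct (bl_bound _ (bounded_op_linear _ HA)) as [M [HM HMb]].
  assert (HAi_l2 := bl_l2 _ (bounded_op_linear _ HAi)).
  apply (strict_contraction_of_l2norm2_split (apply Ainv) _ M); auto.
  - intros x Hx. rewrite <- (apply_idop x), <- HAAi, apply_mul at 1 by auto. auto.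
  - intros x Hx. rewrite (l2norm2_split_right_inverse 1 A Ainv B) by auto. ring.
Qed.

Lemma opnorm_lt_one_of_strict_contraction A :
  bounded_op A -> strict_contraction (apply A) -> opnorm_lt A 1.
Proof.
  intros HA [a [Ha Hab]]. exists (sqrt a). split.
  - split. apply sqrt_pos. rewrite <- sqrt_1. apply sqrt_lt_1_alt; lra.
  - intros x Hx. split. apply (bl_l2 _ (bounded_op_linear _ HA)); auto.
    rewrite sqrt_sqrt by lra. auto.
Qed.

Theorem mainTheorem3 (eps : R) (Phi Psi PhiInv : op) :
  (eps = 1 \/ eps = -1) ->
  bounded_op Phi -> bounded_op Psi ->
  mul Phi (adj Phi) = addop idop (scaleop eps (mul Psi (adj Psi))) ->
  mul (adj Phi) Phi = addop idop (scaleop eps (mul (trans Psi) (conjop Psi))) ->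
  mul Phi (trans Psi) = scaleop eps (mul Psi (trans Phi)) ->
  mul (adj Phi) Psi = scaleop eps (mul (trans Psi) (conjop Phi)) ->
  bounded_op PhiInv -> mul Phi PhiInv = idop -> mul PhiInv Phi = idop ->
  let X := mul (conjop Psi) PhiInv in
  (eps = 1 -> opnorm_lt X 1) /\
  (forall P : op, orth_projector P ->
     bounded_invertible
       (subop idop (scaleop eps (mul (mul (mul (adj X) (trans P)) X) P))) /\
     bounded_invertible
       (subop idop (scaleop eps (mul (mul (mul X P) (adj X)) (trans P))))).
Proof.
  intros Heps HPhi HPsi _ HPhiPhi _ _ HPi HPhiPi _ X.
  rewrite <- adj_conjop in HPhiPhi.
  assert (HX : bounded_op X) by (apply bounded_mul, HPi; apply bounded_conjop; auto).
  assert (HXc : eps = 1 -> strict_contraction (apply X))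
    by (intros ->; apply (strict_contraction_mul_right_inverse Phi); auto using bounded_conjop).
  split; [intros E; apply opnorm_lt_one_of_strict_contraction; auto |].
  intros P HP. pose proof HP as [BP _].
  split.
  - apply bounded_invertible_one_sub_sandwich;
      auto using orth_projection_apply, orth_projection_apply_trans, bounded_trans.
  - rewrite <- (adj_adj X) at 1.
    apply bounded_invertible_one_sub_sandwich;
      auto using orth_projection_apply, orth_projection_apply_trans, bounded_trans, bounded_adj.
    intros E. apply adj_strict_contraction; auto.
Qed.
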